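(* Let $A=(\alpha_n)_{n\in\mathbb{N}}$ and $B=(\beta_m)_{m\in\mathbb{N}}$ be sequences of positive real numbers with $\alpha_j\neq\alpha_\ell$ and $\beta_j\neq\beta_\ell$ for all $1\le j<\ell<\infty$. Consider urn model II with these weights, and let $X_{n,m}$ be the number of white balls remaining when the process stops, started from $n$ white and $m$ black balls. Then for $n,m\ge 1$ and $1\le k\le n$, \[ \mathbb{P}\{X_{n,m}=k\}=\alpha_k\sum_{j=k}^{n}\frac{\alpha_j^{m+n-k-1}}{\Big(\prod_{\substack{\ell=k\\ \ell\neq j}}^{n}(\alpha_j-\alpha_\ell)\Big)\Big(\prod_{h=1}^{m}(\alpha_j+\beta_h)\Big)}=\alpha_k\sum_{\ell=1}^{m}\frac{\beta_\ell^{n+m-1-k}}{\Big(\prod_{j=k}^{n}(\beta_\ell+\alpha_j)\Big)\Big(\prod_{\substack{h=1\\ h\neq\ell}}^{m}(\beta_\ell-\beta_h)\Big)}, \] and for $n,m\ge 1$, \[ \mathbb{P}\{X_{n,m}=0\}=1-\sum_{j=1}^{n}\frac{\alpha_j^{n+m-1}}{\Big(\prod_{\substack{\ell=1\\ \ell\neq j}}^{n}(\alpha_j-\alpha_\ell)\Big)\Big(\prod_{h=1}^{m}(\alpha_j+\beta_h)\Big)}=\sum_{\ell=1}^{m}\frac{\beta_\ell^{n+m-1}}{\Big(\prod_{j=1}^{n}(\beta_\ell+\alpha_j)\Big)\Big(\prod_{\substack{h=1\\ h\neq\ell}}^{m}(\beta_\ell-\beta_h)\Big)}. \]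
   Context: Urn model II (OK Corral urn with general weights): an urn initially contains $n$ white and $m$ black balls. At each step, if the urn currently contains $n'$ white and $m'$ black balls, a white ball is drawn with probability $\beta_{m'}/(\alpha_{n'}+\beta_{m'})$ and a black ball with probability $\alpha_{n'}/(\alpha_{n'}+\beta_{m'})$; the drawn ball is discarded. The process stops as soon as one colour is exhausted. $X_{n,m}$ denotes the number of white balls in the urn when the process stops ($0$ if the white balls are exhausted first). Empty products equal $1$. *)

From mathcomp Require Import all_boot all_order all_algebra.
Set Implicit Arguments. Unset Strict Implicit. Unset Printing Implicit Defensive.
Import Order.TTheory GRing.Theory Num.Theory.
Local Open Scope ring_scope.

(* Urn model II (OK Corral urn with general weights a = alpha, b = beta).
   [urnP a b n m k] = P{X_{n,m} = k}: the probability that, starting from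
   n white and m black balls, the process stops with exactly k white balls.
   Defined by first-step analysis (the process stops after at most n+m steps):
   - n = 0 : white exhausted, X = 0;
   - m = 0 (n > 0) : black exhausted, X = n;
   - otherwise, a white ball is drawn with prob. b m/(a n + b m) (-> (n-1,m))
     and a black ball with prob. a n/(a n + b m) (-> (n,m-1)). *)
Fixpoint urnP {R : realFieldType} (a b : nat -> R) (n m k : nat) {struct n} : R :=
  match n with
  | 0 => (k == 0)%:R
  | n'.+1 =>
      (fix g (m : nat) : R :=
         match m with
         | 0 => (k == n'.+1)%:R
         | m'.+1 => b m'.+1 / (a n'.+1 + b m'.+1) * urnP a b n' m'.+1 k
                    + a n'.+1 / (a n'.+1 + b m'.+1) * g m'
         end) m
  end.

From mathcomp Require Import all_boot all_order all_algebra zify.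
From mathcomp.algebra_tactics Require Import ring.
Import Order.TTheory GRing.Theory Num.Theory.
Set Implicit Arguments.
Unset Strict Implicit.
Unset Printing Implicit Defensive.

Local Open Scope ring_scope.

(* The candidate sums obey the first-step recursion of the urn: each of their
   terms splits by the partial-fraction identity
     (a + b) c / ((c - a) (c + b)) = b / (c + b) + a / (c - a),
   and their boundary values are given by the Lagrange identity
     sum_i c_i^p / prod_(j <> i) (c_i - c_j) = [p = s - 1]   for p < s
   over s distinct nodes.  Applied to the nodes a_k, ..., a_n, -b_1, ..., -b_m,
   the same identity turns the sum over the a's into the sum over the b's, and
   shows that the two sums for X = 0 and X > 0 are complementary. *)

Section LagrangeSum.
Variables (R : fieldType) (T : eqType) (c : T -> R).

Definition lagrange_sum (s : seq T) (p : nat) : R :=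
  \sum_(i <- s) c i ^+ p / \prod_(j <- s | j != i) (c i - c j).

Lemma prod_sub_neq0 {s i} : {in s &, injective c} -> i \in s ->
  \prod_(j <- s | j != i) (c i - c j) != 0.
Proof.
move=> c_inj s_i; rewrite prodf_seq_neq0; apply/allP => j s_j.
by apply/implyP => ji; rewrite subr_eq0 (inj_in_eq c_inj) // eq_sym.
Qed.

Lemma lagrange_sum_rem {s} p {i0} : uniq s -> {in s &, injective c} -> i0 \in s ->
  lagrange_sum s p.+1 = c i0 * lagrange_sum s p + lagrange_sum (rem i0 s) p.
Proof.
move=> s_uniq c_inj s_i0; have s_perm := perm_to_rem s_i0.
have t_inj : {in i0 :: rem i0 s &, injective c}.
  by move=> u v; rewrite -!(perm_mem s_perm); apply: c_inj.
rewrite /lagrange_sum !(perm_big _ s_perm).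
under eq_bigr => i _ do rewrite (perm_big _ s_perm).
under [X in _ = c i0 * X + _]eq_bigr => i _ do rewrite (perm_big _ s_perm).
rewrite !big_cons eqxx /= mulrDr -addrA.
congr (_ + _); first by rewrite exprS mulrA.
rewrite mulr_sumr -big_split /=; apply: eq_big_seq => i rem_i.
have i0i : i0 != i by apply: contraTneq rem_i => <-; rewrite mem_rem_uniqF.
have := prod_sub_neq0 t_inj (@mem_behead _ (i0 :: rem i0 s) _ rem_i).
rewrite big_cons i0i mulf_eq0 negb_or => /andP[ci_i0 Di_neq0].
by rewrite exprS; field; rewrite Di_neq0 ci_i0.
Qed.

Lemma lagrange_sum_small s p : uniq s -> {in s &, injective c} ->
  (p < size s)%N -> lagrange_sum s p = (p == (size s).-1)%:R.
Proof.
have [N] := ubnP (size s); elim: N s p => // N IH [|x0 [|x1 t]] p // size_lt.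
  rewrite /= ltnS leqn0 => _ _ /eqP->.
  by rewrite /lagrange_sum !big_cons !big_nil eqxx divr1 addr0.
move=> s_uniq c_inj; set s := [:: x0, x1 & t].
have /and3P[] := s_uniq; rewrite inE => /norP[x01 x0_notin] x1_notin t_uniq.
have s1 : {subset x1 :: t <= s} := @mem_behead _ s.
have s0 : {subset x0 :: t <= s}.
  by move=> u; rewrite !inE => /orP[->|u_t] //; rewrite u_t !orbT.
have inj_sub s' : {subset s' <= s} -> {in s' &, injective c}.
  by move=> sub u v /sub su /sub sv; exact: c_inj.
have L1 p' : (p' <= size t)%N -> lagrange_sum (x1 :: t) p' = (p' == size t)%:R.
  by move=> hp; rewrite IH //= ?x1_notin ?t_uniq //; exact: inj_sub s1.
have L0 p' : (p' <= size t)%N -> lagrange_sum (x0 :: t) p' = (p' == size t)%:R.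
  by move=> hp; rewrite IH //= ?x0_notin ?t_uniq //; exact: inj_sub s0.
have x0_s : x0 \in s := mem_head x0 _.
have x1_s : x1 \in s := @mem_behead _ s _ (mem_head x1 t).
have c10 : c x1 != c x0 by rewrite (inj_in_eq c_inj) // eq_sym.
have rem0 p' := lagrange_sum_rem p' s_uniq c_inj x0_s.
have rem1 p' := lagrange_sum_rem p' s_uniq c_inj x1_s.
rewrite /= eqxx in rem0; rewrite /= (negbTE x01) eqxx in rem1.
(* Comparing the expansions at [x0] and at [x1] kills every sum of degree below the top. *)
have low p' : (p' <= size t)%N -> lagrange_sum s p' = 0.
  move=> hp; apply/eqP; have := rem0 p'; rewrite rem1 L0 // L1 // => /addIr/eqP.
  by rewrite -subr_eq0 -mulrBl mulf_eq0 subr_eq0 (negbTE c10).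
rewrite /= ltnS leq_eqVlt => /orP[/eqP->|hp]; last by rewrite (low _ hp) ltn_eqF.
by rewrite rem0 low // L1 // mulr0 add0r !eqxx.
Qed.

End LagrangeSum.

Lemma prodr_seqN (R : pzRingType) (I : Type) (r : seq I) (P : pred I) (F : I -> R) :
  \prod_(i <- r | P i) - F i = (-1) ^+ count P r * \prod_(i <- r | P i) F i.
Proof.
elim: r => [|u r IH]; first by rewrite !big_nil mulr1.
by rewrite !big_cons /=; case: (P u); rewrite /= IH // exprS mulN1r !mulNr !mulrA commr_sign.
Qed.

(* The contribution of the nodes [x i, ..., x n] to the Lagrange sum over the
   nodes [x i, ..., x n, - y j, ..., - y m]; see [lagrange_sum_nodes]. *)
Definition lagrange_part (R : fieldType) (x y : nat -> R) i n j m N :=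
  \sum_(i <= r < n.+1) x r ^+ N /
     ((\prod_(i <= l < n.+1 | l != r) (x r - x l)) * \prod_(j <= h < m.+1) (x r + y h)).

Section LagrangePart.
Variables (R : fieldType) (x y : nat -> R).
Hypothesis xy_neq0 : forall r h, x r + y h != 0.

Lemma lagrange_part_empty i n j m N : (n < i)%N -> lagrange_part x y i n j m N = 0.
Proof. by move=> n_lt_i; rewrite /lagrange_part big_geq. Qed.

Lemma lagrange_part_sum i n j m N :
  (m < j)%N -> lagrange_part x y i n j m N = lagrange_sum x (index_iota i n.+1) N.
Proof.
by move=> m_lt_j; apply: eq_bigr => r _; rewrite [\prod_(j <= h < m.+1) _]big_geq // mulr1.
Qed.

Lemma prod_add_neq0 j m r : \prod_(j <= h < m) (x r + y h) != 0.
Proof. by rewrite prodf_seq_neq0; apply/allP => h _; rewrite xy_neq0. Qed.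

Lemma lagrange_part_rec i n j m N : (i <= n.+1)%N -> (j <= m.+1)%N ->
  {in index_iota i n.+2 &, injective x} ->
  (x n.+1 + y m.+1) * lagrange_part x y i n.+1 j m.+1 N.+1 =
  y m.+1 * lagrange_part x y i n j m.+1 N + x n.+1 * lagrange_part x y i n.+1 j m N.
Proof.
move=> i_le j_le x_inj; rewrite /lagrange_part.
have D_neq0 r : (i <= r < n.+2)%N -> \prod_(i <= l < n.+2 | l != r) (x r - x l) != 0.
  by move=> r_in; apply: prod_sub_neq0 x_inj _; rewrite mem_index_iota.
rewrite (big_nat_recr _ _ _ i_le) [in X in _ = _ + _ * X](big_nat_recr _ _ _ i_le) /=.
rewrite !mulrDr addrA; congr (_ + _); last first.
  rewrite [\prod_(j <= h < m.+2) _]big_nat_recr //= exprS.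
  by field; rewrite prod_add_neq0 D_neq0 ?i_le //=; exact: xy_neq0.
rewrite !mulr_sumr -big_split /=; apply: eq_big_nat => r /andP[i_r r_n].
have D_split : \prod_(i <= l < n.+2 | l != r) (x r - x l) =
    (\prod_(i <= l < n.+1 | l != r) (x r - x l)) * (x r - x n.+1).
  by rewrite big_mkcond (big_nat_recr _ _ _ i_le) /= -big_mkcond /= ifT // gtn_eqF.
have /andP[Dr_neq0 xr_neq] :
    (\prod_(i <= l < n.+1 | l != r) (x r - x l) != 0) && (x r - x n.+1 != 0).
  by rewrite -negb_or -mulf_eq0 -D_split D_neq0 // i_r ltnW.
rewrite D_split [\prod_(j <= h < m.+2) _]big_nat_recr //= exprS.
by field; rewrite Dr_neq0 xr_neq prod_add_neq0 xy_neq0.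
Qed.

Definition node (u : nat + nat) : R := match u with inl r => x r | inr h => - y h end.

Definition nodes i n j m :=
  [seq inl r | r <- index_iota i n.+1] ++ [seq inr h | h <- index_iota j m.+1].

Lemma lagrange_sum_nodes i n j m p :
  lagrange_sum node (nodes i n j m) p =
  lagrange_part x y i n j m p +
  (-1) ^+ (p + (n.+1 - i + (m.+1 - j)).-1) * lagrange_part y x j m i n p.
Proof.
rewrite /lagrange_sum big_cat !big_map /=; congr (_ + _).
  apply: eq_bigr => r _; rewrite big_cat !big_map /=.
  by congr (_ / (_ * _)); apply: eq_big => // h; rewrite opprK.
rewrite mulr_sumr; apply: eq_big_nat => l l_in; rewrite big_cat !big_map /=.
have -> : \prod_(r <- index_iota i n.+1 | inl r != inr l) (- y l - x r) =
    (-1) ^+ (n.+1 - i) * \prod_(i <= r < n.+1) (y l + x r).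
  rewrite [LHS](eq_big predT (fun r => - (y l + x r))) => [|//|r _]; last by rewrite opprD.
  by rewrite prodr_seqN count_predT size_iota.
have -> : \prod_(h <- index_iota j m.+1 | inr h != inr l) (- y l - - y h) =
    (-1) ^+ (m.+1 - j).-1 * \prod_(j <= h < m.+1 | h != l) (y l - y h).
  transitivity (\prod_(j <= h < m.+1 | h != l) - (y l - y h)).
    by apply: eq_big => // h _; rewrite opprK opprB addrC.
  rewrite prodr_seqN; congr (_ ^+ _ * _).
  have := count_predC (pred1 l) (index_iota j m.+1).
  by rewrite count_uniq_mem ?iota_uniq // mem_index_iota l_in size_iota => <-.
have -> : (p + (n.+1 - i + (m.+1 - j)).-1 = p + (n.+1 - i) + (m.+1 - j).-1)%N by lia.
by rewrite (exprNn (y l)) !invfM !invr_sign !exprD; ring.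
Qed.

Lemma nodes_uniq i n j m : uniq (nodes i n j m).
Proof.
rewrite cat_uniq !map_inj_uniq ?iota_uniq ?andbT //=; try by move=> ? ? [].
by apply/hasPn => _ /mapP[h _ ->]; apply/mapP => -[].
Qed.

Lemma mem_nodes i n j m u : u \in nodes i n j m =
  match u with inl r => r \in index_iota i n.+1 | inr h => h \in index_iota j m.+1 end.
Proof.
rewrite mem_cat; case: u => [r|h].
  by rewrite (mem_map (@inl_inj _ _)) orbC; case: mapP => // -[].
by rewrite (mem_map (@inr_inj _ _)); case: mapP => // -[].
Qed.

Lemma node_inj i n j m :
  {in index_iota i n.+1 &, injective x} -> {in index_iota j m.+1 &, injective y} ->
  {in nodes i n j m &, injective node}.
Proof.
move=> x_inj y_inj [r|h] [s|k]; rewrite !mem_nodes /= => u_in v_in e.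
- by rewrite (x_inj _ _ u_in v_in e).
- by move: (xy_neq0 r k); rewrite e addNr eqxx.
- by move: (xy_neq0 s h); rewrite -e addNr eqxx.
- by rewrite (y_inj _ _ u_in v_in (oppr_inj e)).
Qed.

Lemma lagrange_part_sign i n j m p :
  {in index_iota i n.+1 &, injective x} -> {in index_iota j m.+1 &, injective y} ->
  (p < n.+1 - i + (m.+1 - j))%N ->
  lagrange_part x y i n j m p +
  (-1) ^+ (p + (n.+1 - i + (m.+1 - j)).-1) * lagrange_part y x j m i n p =
  (p == (n.+1 - i + (m.+1 - j)).-1)%:R.
Proof.
move=> x_inj y_inj p_lt.
have size_nodes : size (nodes i n j m) = (n.+1 - i + (m.+1 - j))%N.
  by rewrite size_cat !size_map !size_iota.
rewrite -lagrange_sum_nodes -size_nodes lagrange_sum_small ?size_nodes //.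
  exact: nodes_uniq.
exact: node_inj.
Qed.

Lemma lagrange_part_top i n j m p :
  {in index_iota i n.+1 &, injective x} -> {in index_iota j m.+1 &, injective y} ->
  p.+1 = (n.+1 - i + (m.+1 - j))%N ->
  lagrange_part x y i n j m p + lagrange_part y x j m i n p = 1.
Proof.
move=> x_inj y_inj p_tot; have := @lagrange_part_sign i n j m p x_inj y_inj.
by rewrite -p_tot /= eqxx addnn -mul2n exprM sqrrN !expr1n mul1r => /(_ (ltnSn p)).
Qed.

Lemma lagrange_part_subtop i n j m p :
  {in index_iota i n.+1 &, injective x} -> {in index_iota j m.+1 &, injective y} ->
  p.+2 = (n.+1 - i + (m.+1 - j))%N ->
  lagrange_part x y i n j m p = lagrange_part y x j m i n p.
Proof.
move=> x_inj y_inj p_tot; have := @lagrange_part_sign i n j m p x_inj y_inj.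
rewrite -p_tot /= (ltn_eqF (ltnSn p)) addnS addnn -mul2n exprS exprM sqrrN !expr1n.
by rewrite mulr1 mulN1r => /(_ (leqnSn _)) /eqP; rewrite subr_eq0 => /eqP.
Qed.

End LagrangePart.

Lemma index_iota_inj (T : eqType) (f : nat -> T) i i' N :
  (forall j l, (i <= j)%N -> (j < l)%N -> f j != f l) -> (i <= i')%N ->
  {in index_iota i' N &, injective f}.
Proof.
move=> f_neq ii' j l; rewrite !mem_index_iota => /andP[i'j _] /andP[i'l _] e.
have [jl|lj|//] := ltngtP j l.
- by move: (f_neq j l (leq_trans ii' i'j) jl); rewrite e eqxx.
- by move: (f_neq l j (leq_trans ii' i'l) lj); rewrite e eqxx.
Qed.

Section Urn.
Variables (R : realFieldType) (a b : nat -> R).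
Hypotheses (a_gt0 : forall i, 0 < a i) (b_gt0 : forall i, 0 < b i).
Hypothesis a_neq : forall j l, (1 <= j)%N -> (j < l)%N -> a j != a l.
Hypothesis b_neq : forall j l, (1 <= j)%N -> (j < l)%N -> b j != b l.

Lemma ab_neq0 r h : a r + b h != 0.
Proof. by rewrite lt0r_neq0 // addr_gt0. Qed.

Lemma ba_neq0 h r : b h + a r != 0.
Proof. by rewrite addrC ab_neq0. Qed.

Lemma urnP_SS n m k : urnP a b n.+1 m.+1 k =
  b m.+1 / (a n.+1 + b m.+1) * urnP a b n m.+1 k +
  a n.+1 / (a n.+1 + b m.+1) * urnP a b n.+1 m k.
Proof. by []. Qed.

Lemma urnP_gt n m k : (n < k)%N -> urnP a b n m k = 0.
Proof.
elim: n m => [|n IH] m n_lt_k; first by case: k n_lt_k.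
elim: m => [|m IHm]; first by rewrite /= gtn_eqF.
by rewrite urnP_SS IH 1?ltnW // IHm !mulr0 addr0.
Qed.

Lemma urnP_all_white n m :
  urnP a b n.+1 m n.+1 = \prod_(1 <= h < m.+1) (a n.+1 / (a n.+1 + b h)).
Proof.
elim: m => [|m IH]; first by rewrite /= eqxx big_geq.
by rewrite urnP_SS urnP_gt // mulr0 add0r IH [RHS]big_nat_recr //= mulrC.
Qed.

Lemma urnP_white k n m : (1 <= k <= n)%N ->
  urnP a b n m.+1 k = a k * lagrange_part a b k n 1 m.+1 (m + n - k).
Proof.
move=> /andP[k_gt0 k_le_n].
have a_inj N : {in index_iota k N &, injective a} := index_iota_inj a_neq k_gt0.
elim: n m k_le_n => [|n IH] m; first by rewrite leqn0 => /eqP k0; rewrite k0 in k_gt0.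
rewrite leq_eqVlt ltnS => /orP[/eqP-> | k_le_n].
  rewrite urnP_all_white /lagrange_part big_nat1.
  rewrite [\prod_(n.+1 <= l < n.+2 | _) _]big_mkcond big_nat1 eqxx mul1r addnK.
  by rewrite prodf_div prodr_const_nat mulrA -exprS.
suff white m' : urnP a b n.+1 m' k = a k * lagrange_part a b k n.+1 1 m' (m' + n - k).
  by rewrite white addSn addnS.
elim: m' => [|m' IHm].
  rewrite /= ltn_eqF // lagrange_part_sum // lagrange_sum_small ?iota_uniq ?a_inj //;
    rewrite /index_iota size_iota; last lia.
  by rewrite ltn_eqF ?mulr0 //; lia.
have rec := lagrange_part_rec ab_neq0 (m' + n - k) (leqW k_le_n) (ltn0Sn m') (a_inj _).
rewrite urnP_SS IH // IHm addSn subSn ?(leq_trans k_le_n (leq_addl _ _)) //.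
apply: (mulfI (ab_neq0 n.+1 m'.+1)); rewrite [RHS]mulrCA rec.
by field; apply: ab_neq0.
Qed.

Lemma urnP_black n m : urnP a b n m.+1 0 = lagrange_part b a 1 m.+1 1 n (n + m).
Proof.
have b_inj N : {in index_iota 1 N &, injective b} := index_iota_inj b_neq (leqnn 1).
elim: n m => [|n IH] m.
  rewrite /= lagrange_part_sum // lagrange_sum_small ?iota_uniq ?b_inj //;
    by rewrite /index_iota size_iota ?eqxx.
suff black m' : urnP a b n.+1 m' 0 = lagrange_part b a 1 m' 1 n.+1 (n + m').
  by rewrite black addSn addnS.
elim: m' => [|m' IHm]; first by rewrite lagrange_part_empty.
have rec := lagrange_part_rec ba_neq0 (n + m') (ltn0Sn m') (ltn0Sn n) (b_inj _).
rewrite urnP_SS IH IHm addnS.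
apply: (mulfI (ba_neq0 m'.+1 n.+1)); rewrite rec.
by field; apply: ab_neq0.
Qed.

End Urn.

Theorem theorem2 (R : realFieldType) (a b : nat -> R)
  (ha : forall i, 0 < a i) (hb : forall i, 0 < b i)
  (hadist : forall j l : nat, (1 <= j)%N -> (j < l)%N -> a j != a l)
  (hbdist : forall j l : nat, (1 <= j)%N -> (j < l)%N -> b j != b l)
  (n m : nat) (hn : (1 <= n)%N) (hm : (1 <= m)%N) :
  (forall k : nat, (1 <= k <= n)%N ->
     urnP a b n m k =
       a k * \sum_(k <= j < n.+1)
          a j ^+ (m + n - k - 1) /
          ((\prod_(k <= l < n.+1 | l != j) (a j - a l)) *
           (\prod_(1 <= h < m.+1) (a j + b h)))
     /\
     urnP a b n m k =
       a k * \sum_(1 <= l < m.+1)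
          b l ^+ (n + m - 1 - k) /
          ((\prod_(k <= j < n.+1) (b l + a j)) *
           (\prod_(1 <= h < m.+1 | h != l) (b l - b h))))
  /\
  (urnP a b n m 0 =
     1 - \sum_(1 <= j < n.+1)
          a j ^+ (n + m - 1) /
          ((\prod_(1 <= l < n.+1 | l != j) (a j - a l)) *
           (\prod_(1 <= h < m.+1) (a j + b h)))
   /\
   urnP a b n m 0 =
     \sum_(1 <= l < m.+1)
          b l ^+ (n + m - 1) /
          ((\prod_(1 <= j < n.+1) (b l + a j)) *
           (\prod_(1 <= h < m.+1 | h != l) (b l - b h)))).
Proof.
case: m hm => // m _.
have a_inj i N : (1 <= i)%N -> {in index_iota i N &, injective a} := index_iota_inj hadist.
have b_inj N : {in index_iota 1 N &, injective b} := index_iota_inj hbdist (leqnn 1).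
have swap_ab k p : \sum_(1 <= l < m.+2) b l ^+ p /
    ((\prod_(k <= j < n.+1) (b l + a j)) * (\prod_(1 <= h < m.+2 | h != l) (b l - b h))) =
    lagrange_part b a 1 m.+1 k n p.
  by apply: eq_bigr => l _; rewrite [X in _ / X]mulrC.
split=> [k /andP[k_gt0 k_le_n] | ].
  have -> : (m.+1 + n - k - 1 = m + n - k)%N by lia.
  have -> : (n + m.+1 - 1 - k = m + n - k)%N by lia.
  rewrite swap_ab (urnP_white ha hb hadist) ?k_gt0 //; split=> //; congr (_ * _).
  by apply: (lagrange_part_subtop (ab_neq0 ha hb) (a_inj _ _ k_gt0) (b_inj _)); lia.
have -> : (n + m.+1 - 1 = n + m)%N by lia.
have top : lagrange_part a b 1 n 1 m.+1 (m + n) + lagrange_part b a 1 m.+1 1 n (m + n) = 1.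
  by apply: (lagrange_part_top (ab_neq0 ha hb) (a_inj _ _ (leqnn 1)) (b_inj _)); lia.
rewrite swap_ab (urnP_black ha hb hbdist) addnC; split=> //.
by apply/eqP; rewrite eq_sym subr_eq addrC top.
Qed.
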